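(* Let $\gamma>0$ and let $u:(0,\infty)\to(0,\infty)$ be a stable function bounded from above by some $u^\infty>0$. For every $X=(x_1,\ldots,x_n)\in\mathbb R^{p\times n}$ with nonzero columns, there exists a unique $\hat\Delta\in\mathcal D_n^+$ such that $\hat\Delta=I^X(u(\hat\Delta))$, i.e. $\hat\Delta_i=\frac1nx_i^T\big(\frac1nXu(\hat\Delta)X^T+\gamma I_p\big)^{-1}x_i$ for all $i\in[n]$.
   Context: $u$ stable means $|u(x)-u(y)|\le\sqrt{\frac{u(x)u(y)}{xy}}|x-y|$ for all $x,y>0$ (equivalently $t\mapsto tu(t)$ non-decreasing and $t\mapsto u(t)/t$ non-increasing). $\mathcal D_n^+$ is the set of $n\times n$ diagonal matrices with positive diagonal entries, and $u(\Delta)$ is $u$ applied entrywise to the diagonal. $I^X(\Delta)=\mathrm{diag}\big(\frac1nx_i^T(\frac1nX\Delta X^T+\gamma I_p)^{-1}x_i\big)_i$. *)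

From mathcomp Require Import all_boot all_order all_algebra.
From mathcomp Require Import reals.
Set Implicit Arguments. Unset Strict Implicit. Unset Printing Implicit Defensive.
Import Order.TTheory GRing.Theory Num.Theory.
Local Open Scope ring_scope.

(* u : (0,oo) -> (0,oo) is modelled as u : R -> R; only its values on
   positive reals are constrained/used. *)
Definition positive_fun (R : realType) (u : R -> R) : Prop :=
  forall x, 0 < x -> 0 < u x.

Definition stable (R : realType) (u : R -> R) : Prop :=
  forall x y, 0 < x -> 0 < y ->
    `|u x - u y| <= Num.sqrt (u x * u y / (x * y)) * `|x - y|.

(* A diagonal matrix in D_n^+ is represented by its diagonal d : 'rV_n. *)
Definition pos_diag (R : realType) (n : nat) (d : 'rV[R]_n) : Prop :=
  forall i, 0 < d 0 i.

Definition u_diag (R : realType) (n : nat) (u : R -> R) (d : 'rV[R]_n) : 'rV[R]_n :=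
  map_mx u d.

Definition IX (R : realType) (p n : nat) (gamma : R) (X : 'M[R]_(p, n))
  (d : 'rV[R]_n) : 'rV[R]_n :=
  \row_i (n%:R^-1 *
    ((col i X)^T *m invmx (n%:R^-1 *: (X *m diag_mx d *m X^T) + gamma%:M)
       *m col i X) 0 0).

(* Call positive vectors d, d' a-close when d_i <= a d'_i and d'_i <= a d_i
   for all i.  The map F(D) = I^X(u(D)) is a contraction for this relation.
   By stability, a-close D, D' give a-close u(D), u(D').  Since
   x^T M^-1 x = max_y (2 y x - y M y) and n^-1 X u(D) X^T <= L I with
   L = u^inf ||X||_F^2 / n, the quadratic forms of the two resolvents differ by
   a factor at most 1 + r (a - 1), where r = L / (L + gamma) < 1.  So F(D) and
   F(D') are (1 + r (a - 1))-close.  F also maps into a box [lo, hi]^n with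
   lo > 0.  Uniqueness follows by iterating the contraction.  For existence,
   the Picard iterates are Cauchy at a geometric rate, and one more contraction
   step shows that their limit is a fixed point. *)

From mathcomp Require Import all_boot all_order all_algebra.
From mathcomp Require Import classical_sets reals.
From mathcomp Require Import ring lra.
Set Implicit Arguments. Unset Strict Implicit. Unset Printing Implicit Defensive.
Import Order.TTheory GRing.Theory Num.Theory.
Local Open Scope ring_scope.

Lemma sum_CauchySchwarz (R : realFieldType) (I : finType) (f g : I -> R) :
  (\sum_i f i * g i) ^+ 2 <= (\sum_i f i ^+ 2) * (\sum_i g i ^+ 2).
Proof.
set A := \sum_i f i ^+ 2; set B := \sum_i g i ^+ 2; set C := \sum_i f i * g i.
have sqr_sum_ge0 (h : I -> R) : 0 <= \sum_i h i ^+ 2.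
  by apply: sumr_ge0 => i _; exact: sqr_ge0.
have : 0 <= \sum_i (B * f i - C * g i) ^+ 2 := sqr_sum_ge0 _.
have -> : \sum_i (B * f i - C * g i) ^+ 2 = B * (A * B - C ^+ 2).
  rewrite (eq_bigr (fun i => B ^+ 2 * f i ^+ 2 - 2 * B * C * (f i * g i)
                            + C ^+ 2 * g i ^+ 2)) => [|i _]; last by ring.
  by rewrite !big_split /= sumrN -!mulr_sumr -/A -/B -/C; ring.
have [B_gt0 | | B0] := ltrgt0P B.
- by rewrite pmulr_rge0 // subr_ge0.
- by rewrite ltNge sqr_sum_ge0.
- move=> _; have g0 i : g i = 0.
    apply/eqP; rewrite -sqrf_eq0; apply/eqP.
    by apply: (psumr_eq0P _ B0) => // j _; exact: sqr_ge0.
  rewrite /C big1 => [|i _]; last by rewrite g0 mulr0.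
  by rewrite B0 expr0n mulr0.
Qed.

Lemma fin_pos_lbound (R : realFieldType) (I : finType) (f : I -> R) :
  (forall i, 0 < f i) -> exists2 m, 0 < m & forall i, m <= f i.
Proof.
move=> f_gt0; have inv_ge0 i : 0 <= (f i)^-1 by rewrite invr_ge0 ltW.
have S_ge0 : 0 <= \sum_i (f i)^-1 by exact: sumr_ge0.
exists (1 + \sum_i (f i)^-1)^-1 => [|i]; first by rewrite invr_gt0; lra.
rewrite -lef_pV2 ?posrE ?invr_gt0 ?f_gt0 //; last by lra.
by rewrite invrK (bigD1 i) //= addrCA lerDl addr_ge0 ?sumr_ge0.
Qed.

Section GeometricSequences.
Variable R : realType.
Implicit Types (r K e : R) (s : nat -> R).

Lemma geometric_small r K e : 0 <= r -> r < 1 -> 0 < e ->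
  exists t : nat, r ^+ t * K <= e.
Proof.
move=> r0 r1 e0.
have bernoulli t : (1 + (1 - r) * t%:R) * r ^+ t <= 1.
  elim: t => [|t IH]; first by rewrite mulr0 addr0 expr0 mulr1.
  apply: le_trans IH; rewrite exprS mulrA ler_wpM2r ?exprn_ge0 // -natr1.
  have : 0 <= (1 - r) ^+ 2 * (t%:R + 1) by rewrite mulr_ge0 ?sqr_ge0 ?addr_ge0.
  nra.
have re0 : 0 < (1 - r) * e by rewrite mulr_gt0 // subr_gt0.
set t := Num.Def.archi_bound (`|K| / ((1 - r) * e)).
have tP := archi_boundP (divr_ge0 (normr_ge0 K) (ltW re0)).
rewrite -/t ltr_pdivrMr // in tP.
exists t; apply: le_trans (ler_wpM2l (exprn_ge0 t r0) (ler_norm K)) _.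
have := ler_wpM2r (ltW e0) (bernoulli t).
have := ler_wpM2l (exprn_ge0 t r0) (ltW tP); nra.
Qed.

Lemma geometric_tail s r K : 0 <= r -> r < 1 ->
  (forall t, `|s t.+1 - s t| <= r ^+ t * K) ->
  forall t k, `|s (t + k)%N - s t| <= r ^+ t * K / (1 - r).
Proof.
move=> r0 r1 step t k.
have K0 : 0 <= K by have := step 0%N; rewrite expr0 mul1r; apply: le_trans.
have r1' : 0 < 1 - r by rewrite subr_gt0.
suff : `|s (t + k)%N - s t| <= r ^+ t * K * (1 - r ^+ k) / (1 - r).
  move/le_trans; apply; rewrite ler_pM2r ?invr_gt0 // ler_piMr ?mulr_ge0 ?exprn_ge0 //.
  by rewrite lerBlDr lerDl exprn_ge0.
elim: k => [|k IH]; first by rewrite addn0 subrr normr0 expr0 subrr mulr0 mul0r.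
rewrite addnS (le_trans (ler_distD (s (t + k)%N) _ _)) //.
have -> : r ^+ t * K * (1 - r ^+ k.+1) / (1 - r)
          = r ^+ (t + k) * K + r ^+ t * K * (1 - r ^+ k) / (1 - r).
  by rewrite exprS exprD; field; rewrite subr_eq0 gt_eqF.
exact: lerD (step _) IH.
Qed.

Lemma tail_bounded_limit s (E : nat -> R) :
  (forall t k, `|s (t + k)%N - s t| <= E t) -> exists l, forall t, `|l - s t| <= E t.
Proof.
move=> tail; set S := [set s t - E t | t in [set: nat]]%classic.
have E0 t : 0 <= E t by have := tail t 0%N; rewrite addn0 subrr normr0.
have S_ub t : ubound S (s t + E t).
  move=> _ [t' _ <-]; have [tt'|/ltnW t't] := leqP t t'.
  - have := tail t (t' - t)%N; rewrite subnKC // ler_norml => /andP[].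
    by have := E0 t'; lra.
  - have := tail t' (t - t')%N; rewrite subnKC // ler_norml => /andP[].
    by have := E0 t; lra.
exists (sup S) => t; rewrite ler_norml; apply/andP; split.
- by have := @ub_le_sup _ S (ex_intro _ _ (S_ub 0%N)) _ (ex_intro2 _ _ t I erefl); lra.
- have := ge_sup (ex_intro _ _ (ex_intro2 _ _ t I erefl)) (S_ub t); lra.
Qed.

End GeometricSequences.

Section QuadraticForms.
Variables (R : realFieldType) (p : nat).
Implicit Types (M : 'M[R]_p) (x : 'cV[R]_p) (y : 'rV[R]_p).

Definition qform M y : R := (y *m M *m y^T) 0 0.
Definition invform M x : R := (x^T *m invmx M *m x) 0 0.
Definition posdefmx M := M^T = M /\ forall y, y != 0 -> 0 < qform M y.

Lemma qformZ M k y : qform M (k *: y) = k ^+ 2 * qform M y.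
Proof. by rewrite /qform linearZ -!scalemxAl -scalemxAr !mxE mulrA -expr2. Qed.

Lemma qform_ge0 M y : posdefmx M -> 0 <= qform M y.
Proof.
case=> _ Mpos; have [->|/Mpos/ltW //] := eqVneq y 0.
by rewrite /qform !mul0mx mxE.
Qed.

Lemma posdefmx_unit M : posdefmx M -> M \in unitmx.
Proof.
move=> [_ Mpos]; rewrite -row_free_unit; apply/inj_row_free => y yM0.
have [//|/Mpos] := eqVneq y 0.
by rewrite /qform yM0 mul0mx mxE ltxx.
Qed.

Lemma qform1 y : qform 1%:M y = \sum_j y 0 j ^+ 2.
Proof. by rewrite /qform mulmx1 mxE; under eq_bigr do rewrite mxE -expr2. Qed.

Lemma qform1_ge0 y : 0 <= qform 1%:M y.
Proof. by rewrite qform1 sumr_ge0 // => j _; exact: sqr_ge0. Qed.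

Lemma sqr_dotmx_le y x : ((y *m x) 0 0) ^+ 2 <= qform 1%:M y * qform 1%:M x^T.
Proof.
rewrite !qform1 mxE; under [X in _ <= _ * X]eq_bigr do rewrite mxE.
exact: sum_CauchySchwarz.
Qed.

Lemma posdefmx1 : posdefmx 1%:M.
Proof.
split=> [|y y0]; first exact: tr_scalar_mx.
have sq_ge0 j : 0 <= y 0 j ^+ 2 by exact: sqr_ge0.
rewrite qform1 lt_neqAle sumr_ge0 // andbT eq_sym; apply: contra y0 => /eqP sum0.
apply/eqP/rowP => j; apply/eqP; rewrite mxE -sqrf_eq0.
by apply/eqP; apply: (psumr_eq0P _ sum0).
Qed.

Section Variational.
Variables (M : 'M[R]_p) (x : 'cV[R]_p).
Hypothesis M_posdef : posdefmx M.

Let w := x^T *m invmx M.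
Let wM : w *m M = x^T. Proof. by rewrite mulmxKV // posdefmx_unit. Qed.
Let Mw : M *m w^T = x.
Proof. by case: M_posdef => MT _; rewrite -{1}MT -trmx_mul wM trmxK. Qed.
Let invform_w : invform M x = (w *m x) 0 0. Proof. by []. Qed.
Let qform_w : qform M w = invform M x.
Proof. by rewrite invform_w /qform -mulmxA Mw. Qed.

Lemma invform_ge y : 2 * (y *m x) 0 0 - qform M y <= invform M x.
Proof.
have := qform_ge0 (y - w) M_posdef.
have yMw : (y *m M *m w^T) 0 0 = (y *m x) 0 0 by rewrite -mulmxA Mw.
have wMy : (w *m M *m y^T) 0 0 = (y *m x) 0 0.
  by rewrite wM -trmx_mul mxE.
have entryB (A B : 'M[R]_1) : (A - B) 0 0 = A 0 0 - B 0 0 by rewrite !mxE.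
rewrite /qform linearB /= !(mulmxBl, mulmxBr) !entryB -!/(qform _ _).
rewrite qform_w yMw wMy; lra.
Qed.

Lemma invform_attained : exists y, invform M x = 2 * (y *m x) 0 0 - qform M y.
Proof. by exists w; rewrite qform_w -invform_w; ring. Qed.

End Variational.

Lemma invform1 x : invform 1%:M x = qform 1%:M x^T.
Proof. by rewrite /invform /qform invmx1 trmxK. Qed.

Lemma invform_le M M' k x : posdefmx M -> posdefmx M' -> 0 < k ->
  (forall y, qform M y <= k * qform M' y) -> invform M' x <= k * invform M x.
Proof.
move=> M_posdef M'_posdef k_gt0 le_MM'.
have [w ->] := invform_attained x M'_posdef.
have := @invform_ge M x M_posdef (k^-1 *: w).
rewrite qformZ -scalemxAl mxE => /(ler_wpM2l (ltW k_gt0)).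
have -> : k * (2 * (k^-1 * (w *m x) 0 0) - k^-1 ^+ 2 * qform M w)
          = 2 * (w *m x) 0 0 - qform M w / k by field; rewrite gt_eqF.
have : qform M w / k <= qform M' w by rewrite ler_pdivrMr // mulrC.
lra.
Qed.

End QuadraticForms.

Section Resolvent.
Variables (R : realType) (p n : nat) (X : 'M[R]_(p, n)) (gamma : R).
Hypothesis gamma_gt0 : 0 < gamma.
Implicit Types (d : 'rV[R]_n) (x : 'cV[R]_p) (y : 'rV[R]_p).

Definition resolvent d : 'M[R]_p := n%:R^-1 *: (X *m diag_mx d *m X^T) + gamma%:M.

Lemma IXE d i : IX gamma X d 0 i = n%:R^-1 * invform (resolvent d) (col i X).
Proof. by rewrite mxE. Qed.

Definition frobenius2 : R := \sum_j qform 1%:M (col j X)^T.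

Definition gram_bound (U : R) : R := n%:R^-1 * U * frobenius2.

Lemma gram_bound_ge0 U : 0 <= U -> 0 <= gram_bound U.
Proof.
by move=> U_ge0; rewrite !mulr_ge0 ?invr_ge0 ?sumr_ge0 // => j _; exact: qform1_ge0.
Qed.

Let wsum d y := \sum_j d 0 j * ((y *m col j X) 0 0) ^+ 2.

Let qform_resolvent d y :
  qform (resolvent d) y = n%:R^-1 * wsum d y + gamma * qform 1%:M y.
Proof.
have entryD (A B : 'M[R]_1) : (A + B) 0 0 = A 0 0 + B 0 0 by rewrite !mxE.
have entryZ k (A : 'M[R]_1) : (k *: A) 0 0 = k * A 0 0 by rewrite !mxE.
rewrite /qform mulmxDr mulmxDl entryD -scalemxAr -scalemxAl entryZ.
rewrite mul_mx_scalar -scalemxAl entryZ mulmx1; congr (_ * _ + _).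
rewrite !mulmxA -[_ *m X^T *m y^T]mulmxA -trmx_mul mxE.
apply: eq_bigr => j _; rewrite mul_mx_diag !mxE.
have -> : \sum_k y 0 k * col j X k 0 = \sum_k y 0 k * X k j.
  by apply: eq_bigr => k _; rewrite mxE.
ring.
Qed.

Lemma resolvent_posdef d : (forall j, 0 <= d 0 j) -> posdefmx (resolvent d).
Proof.
move=> d_ge0; split.
  by rewrite /resolvent linearD linearZ /= !trmx_mul trmxK tr_diag_mx tr_scalar_mx mulmxA.
move=> y y0; rewrite qform_resolvent ltr_pwDr ?pmulr_rgt0 ?(@posdefmx1 R p).2 //.
by rewrite mulr_ge0 ?invr_ge0 // sumr_ge0 // => j _; rewrite mulr_ge0 ?sqr_ge0.
Qed.

Let wsum_ge0 d y : (forall j, 0 <= d 0 j) -> 0 <= wsum d y.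
Proof. by move=> d_ge0; apply: sumr_ge0 => j _; rewrite mulr_ge0 ?sqr_ge0. Qed.

Let wsum_le_scale a d d' y : (forall j, d 0 j <= a * d' 0 j) -> wsum d y <= a * wsum d' y.
Proof.
move=> dd'; rewrite /wsum mulr_sumr; apply: ler_sum => j _.
by rewrite mulrA ler_wpM2r ?sqr_ge0.
Qed.

Let wsum_le_norm U d y : (forall j, 0 <= d 0 j) -> (forall j, d 0 j <= U) ->
  wsum d y <= U * frobenius2 * qform 1%:M y.
Proof.
move=> d_ge0 d_le; rewrite /frobenius2 mulr_sumr mulr_suml; apply: ler_sum => j _.
apply: le_trans (ler_wpM2l (d_ge0 j) (sqr_dotmx_le y (col j X))) _.
by rewrite -mulrA [qform _ y * _]mulrC ler_wpM2r ?mulr_ge0 ?qform1_ge0.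
Qed.

Lemma invform_resolvent_le d x : (forall j, 0 <= d 0 j) ->
  invform (resolvent d) x <= gamma^-1 * qform 1%:M x^T.
Proof.
move=> d_ge0; rewrite -invform1.
apply: invform_le x (posdefmx1 _ _) (resolvent_posdef d_ge0) _ _ => [|y].
  by rewrite invr_gt0.
rewrite qform_resolvent mulrDr mulKf ?gt_eqF // lerDr.
by rewrite !mulr_ge0 ?invr_ge0 ?wsum_ge0 // ltW.
Qed.

Lemma invform_resolvent_ge U d x : 0 <= U ->
  (forall j, 0 <= d 0 j) -> (forall j, d 0 j <= U) ->
  qform 1%:M x^T <= (gram_bound U + gamma) * invform (resolvent d) x.
Proof.
move=> U_ge0 d_ge0 d_le; rewrite -invform1.
apply: invform_le x (resolvent_posdef d_ge0) (posdefmx1 _ _) _ _ => [|y].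
  by rewrite ltr_wpDl // gram_bound_ge0.
rewrite qform_resolvent mulrDl lerD2r -!mulrA ler_wpM2l ?invr_ge0 //.
by rewrite mulrA wsum_le_norm.
Qed.

Lemma invform_resolvent_scale U a d d' x : 0 <= U -> 1 <= a ->
    (forall j, 0 <= d 0 j) -> (forall j, 0 <= d' 0 j) ->
    (forall j, d 0 j <= U) -> (forall j, d 0 j <= a * d' 0 j) ->
  invform (resolvent d') x <=
    (1 + gram_bound U / (gram_bound U + gamma) * (a - 1)) * invform (resolvent d) x.
Proof.
move=> U_ge0 a1 d_ge0 d'_ge0 d_le dd'.
have L_ge0 := gram_bound_ge0 U_ge0; set L := gram_bound U in L_ge0 *.
have Lg_gt0 : 0 < L + gamma by rewrite ltr_wpDl.
have -> : 1 + L / (L + gamma) * (a - 1) = (gamma + a * L) / (L + gamma).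
  by field; rewrite gt_eqF.
apply: invform_le x (resolvent_posdef d_ge0) (resolvent_posdef d'_ge0) _ _ => [|y].
  apply: divr_gt0 => //; apply: lt_le_trans gamma_gt0 _.
  by rewrite lerDl mulr_ge0 // (le_trans ler01 a1).
rewrite !qform_resolvent mulrAC ler_pdivlMr //.
have N_ge0 := qform1_ge0 y.
have n_ge0 : 0 <= n%:R^-1 :> R by rewrite invr_ge0.
have s_le_as' : n%:R^-1 * wsum d y <= a * (n%:R^-1 * wsum d' y).
  by rewrite mulrCA ler_wpM2l ?wsum_le_scale.
have s_le_LN : n%:R^-1 * wsum d y <= L * qform 1%:M y.
  by rewrite /L /gram_bound -!mulrA ler_wpM2l // mulrA wsum_le_norm.
set s := n%:R^-1 * wsum d y in s_le_as' s_le_LN *.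
set s' := n%:R^-1 * wsum d' y in s_le_as' *.
set N := qform 1%:M y in N_ge0 s_le_LN *.
have a1_ge0 : 0 <= a - 1 by rewrite subr_ge0.
have a_gt0 : 0 < a by apply: lt_le_trans a1.
have s_sub_s' : s - s' <= (a - 1) * (L * N).
  have := ler_wpM2l a1_ge0 s_le_LN.
  have := mulr_ge0 (mulr_ge0 a1_ge0 a1_ge0) (mulr_ge0 L_ge0 N_ge0).
  by rewrite -(ler_pM2l a_gt0); nra.
have := ler_wpM2l L_ge0 s_le_as'; have := ler_wpM2l (ltW gamma_gt0) s_sub_s'.
nra.
Qed.

End Resolvent.

(* Stability means that t u(t) and u(t) / t move in opposite directions. *)
Lemma stable_cross_le0 (R : realType) (u : R -> R) x y : positive_fun u -> stable u ->
  0 < x -> 0 < y -> (u x * x - u y * y) * (u x * y - u y * x) <= 0.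
Proof.
move=> u_pos u_stable x_gt0 y_gt0; have xy_gt0 : 0 < x * y by rewrite mulr_gt0.
have t_ge0 : 0 <= u x * u y / (x * y) by rewrite divr_ge0 ?mulr_ge0 // ltW ?u_pos.
have := u_stable x y x_gt0 y_gt0.
rewrite -ler_sqr ?nnegrE ?mulr_ge0 ?sqrtr_ge0 // exprMn sqr_sqrtr //.
rewrite !real_normK ?num_real // -(ler_pM2r xy_gt0) [_ / _ * _ * _]mulrAC.
rewrite divfK ?gt_eqF // => sq.
have -> : (u x * x - u y * y) * (u x * y - u y * x)
          = (u x - u y) ^+ 2 * (x * y) - u x * u y * (x - y) ^+ 2 by ring.
by rewrite subr_le0.
Qed.

Lemma stable_close (R : realType) (u : R -> R) a x y : positive_fun u -> stable u ->
  0 < x -> 0 < y -> x <= a * y -> y <= a * x -> u x <= a * u y.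
Proof.
move=> u_pos u_stable x_gt0 y_gt0 xy yx.
have [ux_gt0 uy_gt0] := (u_pos x x_gt0, u_pos y y_gt0).
rewrite leNgt; apply/negP => ua_lt.
have := stable_cross_le0 u_pos u_stable x_gt0 y_gt0; apply/negP; rewrite -ltNge.
have := ltr_pM2r x_gt0 (a * u y) (u x); have := ltr_pM2r y_gt0 (a * u y) (u x).
have := ler_pM2l uy_gt0 y (a * x); have := ler_pM2l uy_gt0 x (a * y).
rewrite yx xy ua_lt => ? ? ? ?; apply: mulr_gt0; lra.
Qed.

Section Closeness.
Variables (R : realType) (n : nat).
Implicit Types (a b e lo hi : R) (d : 'rV[R]_n).

(* close a d d' says that the Thompson distance max_i |log d_i - log d'_i|
   is at most log a. *)
Definition close a d d' := forall i, d 0 i <= a * d' 0 i /\ d' 0 i <= a * d 0 i.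

Lemma close_sym a d d' : close a d d' -> close a d' d.
Proof. by move=> dd' i; have [] := dd' i. Qed.

Lemma close_trans a b d d' (d'' : 'rV[R]_n) : 0 <= a -> 0 <= b ->
  close a d d' -> close b d' d'' -> close (a * b) d d''.
Proof.
move=> a0 b0 dd' d'd'' i; have [le1 le2] := dd' i; have [le3 le4] := d'd'' i.
split; first by rewrite -mulrA (le_trans le1) // ler_wpM2l.
by rewrite [a * b]mulrC -mulrA (le_trans le4) // ler_wpM2l.
Qed.

Lemma close_le a b d d' : pos_diag d -> pos_diag d' -> a <= b ->
  close a d d' -> close b d d'.
Proof.
move=> dpos d'pos ab dd' i; have [le1 le2] := dd' i.
by split; [apply: le_trans le1 _ | apply: le_trans le2 _]; rewrite ler_wpM2r // ltW.
Qed.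

Lemma close_exists d d' : pos_diag d -> pos_diag d' -> exists2 a, 1 <= a & close a d d'.
Proof.
move=> dpos d'pos; pose q i := d 0 i / d' 0 i + d' 0 i / d 0 i.
have q_ge0 i : 0 <= q i by rewrite addr_ge0 // divr_ge0 // ltW.
exists (1 + \sum_i q i); first by rewrite lerDl sumr_ge0.
move=> i; have qi_le : q i <= \sum_j q j by rewrite (bigD1 i) //= lerDl sumr_ge0.
have := dpos i; have := d'pos i; rewrite /q in qi_le.
have := divr_ge0 (ltW (dpos i)) (ltW (d'pos i)).
have := divr_ge0 (ltW (d'pos i)) (ltW (dpos i)).
by split; rewrite -ler_pdivrMr //; lra.
Qed.

Lemma close_eq d d' : pos_diag d -> pos_diag d' ->
  (forall e, 0 < e -> close (1 + e) d d') -> d = d'.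
Proof.
move=> dpos d'pos dd'; apply/rowP => i.
have le_by (x y : R) : 0 < y -> (forall e, 0 < e -> x <= (1 + e) * y) -> x <= y.
  move=> y0 xy; apply/ler_addgt0Pr => e e0.
  by have := xy _ (divr_gt0 e0 y0); rewrite mulrDl mul1r divfK ?gt_eqF.
apply/le_anti/andP; split; apply: le_by => // e e0; by have [] := dd' e e0 i.
Qed.

Lemma close_dist a d d' i hi : close a d d' -> 1 <= a ->
  d 0 i <= hi -> d' 0 i <= hi -> `|d 0 i - d' 0 i| <= (a - 1) * hi.
Proof.
move=> dd' a1 d_le d'_le; have [le1 le2] := dd' i.
have := ler_wpM2l (_ : 0 <= a - 1) d_le; have := ler_wpM2l (_ : 0 <= a - 1) d'_le.
by rewrite ler_norml subr_ge0 a1 => ? ?; apply/andP; split; lra.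
Qed.

Lemma close_of_dist e lo d d' : 0 < lo ->
  (forall i, lo <= d 0 i) -> (forall i, lo <= d' 0 i) ->
  (forall i, `|d 0 i - d' 0 i| <= e * lo) -> close (1 + e) d d'.
Proof.
move=> lo0 d_ge d'_ge dist i.
have e0 : 0 <= e by rewrite -(pmulr_lge0 _ lo0) (le_trans _ (dist i)).
have := ler_wpM2l e0 (d_ge i); have := ler_wpM2l e0 (d'_ge i).
by move: (dist i); rewrite ler_norml => /andP[? ?] ? ?; split; lra.
Qed.

End Closeness.

Section ThompsonContraction.
Variables (R : realType) (n : nat) (G : 'rV[R]_n -> 'rV[R]_n) (r lo hi : R).
Hypotheses (r_ge0 : 0 <= r) (r_lt1 : r < 1) (lo_gt0 : 0 < lo).
Hypothesis G_box : forall d, pos_diag d -> forall i, lo <= G d 0 i <= hi.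
Hypothesis G_contract : forall a d d', pos_diag d -> pos_diag d' -> 1 <= a ->
  close a d d' -> close (1 + r * (a - 1)) (G d) (G d').

Let G_pos d : pos_diag d -> pos_diag (G d).
Proof.
by move=> dpos i; have /andP[lo_le _] := G_box dpos i; exact: lt_le_trans lo_le.
Qed.

Lemma iter_pos t d : pos_diag d -> pos_diag (iter t G d).
Proof. by move=> dpos; elim: t => //= t; exact: G_pos. Qed.

Lemma iter_contract t a d d' : pos_diag d -> pos_diag d' -> 1 <= a ->
  close a d d' -> close (1 + r ^+ t * (a - 1)) (iter t G d) (iter t G d').
Proof.
move=> dpos d'pos a1 dd'; elim: t => [|t IH]; first by rewrite expr0 mul1r addrC subrK.
have -> : 1 + r ^+ t.+1 * (a - 1) = 1 + r * ((1 + r ^+ t * (a - 1)) - 1).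
  by rewrite exprS; ring.
apply: G_contract (iter_pos t dpos) (iter_pos t d'pos) _ IH.
by rewrite lerDl mulr_ge0 ?exprn_ge0 // subr_ge0.
Qed.

Lemma fixpoint_unique d d' : pos_diag d -> pos_diag d' -> G d = d -> G d' = d' -> d = d'.
Proof.
move=> dpos d'pos Gd Gd'; have [a a1 dd'] := close_exists dpos d'pos.
apply: close_eq => // e e0; have [t small] := geometric_small (a - 1) r_ge0 r_lt1 e0.
have := iter_contract t dpos d'pos a1 dd'; rewrite !iter_fix //.
by apply: close_le; rewrite ?lerD2l.
Qed.

(* Shifted by one so that every iterate lies in the box. *)
Let picard t := iter t.+1 G (const_mx 1).

Let picard_pos t : pos_diag (picard t).
Proof. by apply: iter_pos => i; rewrite mxE ltr01. Qed.

Let picard_box t i : lo <= picard t 0 i <= hi.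
Proof. by apply: G_box; apply: iter_pos => j; rewrite mxE ltr01. Qed.

Lemma picard_limit : exists2 d, pos_diag d & forall e, 0 < e ->
  exists t, close (1 + e) d (picard t) /\ close (1 + e) d (picard t.+1).
Proof.
have [a a1 close01] := close_exists (picard_pos 0) (picard_pos 1).
have step t i : `|picard t.+1 0 i - picard t 0 i| <= r ^+ t * ((a - 1) * hi).
  have := iter_contract t (picard_pos 0) (picard_pos 1) a1 close01.
  rewrite -!iterSr => cl; rewrite distrC mulrA.
  have -> : r ^+ t * (a - 1) = 1 + r ^+ t * (a - 1) - 1 by ring.
  apply: close_dist cl _ (andP (picard_box t i)).2 (andP (picard_box t.+1 i)).2.
  by rewrite lerDl mulr_ge0 ?exprn_ge0 ?subr_ge0.
pose E t := r ^+ t * ((a - 1) * hi) / (1 - r).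
have E_small e : 0 < e -> exists t, E t <= e.
  move=> e0; have [t small] := geometric_small ((a - 1) * hi / (1 - r)) r_ge0 r_lt1 e0.
  by exists t; rewrite /E -mulrA.
have /fin_all_exists [l near_l] : forall i, exists l, forall t, `|l - picard t 0 i| <= E t.
  by move=> i; apply: tail_bounded_limit; exact: geometric_tail.
have ge_lo i : lo <= l i.
  apply/ler_addgt0Pr => e /E_small [t Ete]; have := near_l i t; rewrite ler_norml.
  by have := picard_box t i; case/andP=> ? _ /andP[? _]; lra.
exists (\row_i l i) => [i|e e0]; first by rewrite mxE (lt_le_trans lo_gt0).
have [t Etlo] := E_small _ (mulr_gt0 e0 lo_gt0); exists t.
have E_dec (i : 'I_n) : E t.+1 <= E t.
  have E0 : 0 <= E t := le_trans (normr_ge0 _) (near_l i t).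
  have -> : E t.+1 = r * E t by rewrite /E exprS; ring.
  by rewrite ler_piMl // ltW.
have lo_le_row i : lo <= (\row_i l i) 0 i by rewrite mxE.
split; apply: close_of_dist lo_gt0 lo_le_row _ _ => i; rewrite ?(andP (picard_box _ i)).1 //.
- by rewrite mxE (le_trans (near_l i t)).
- by rewrite mxE (le_trans (near_l i t.+1)) // (le_trans (E_dec i)).
Qed.

Theorem fixpoint_exists : exists2 d, pos_diag d & G d = d.
Proof.
have [d dpos near_d] := picard_limit.
exists d => //; apply: close_eq; [exact: G_pos | exact: dpos | move=> e e0].
have d_gt0 : 0 < Num.min 1 (e / 3) by rewrite lt_min ltr01 divr_gt0.
have [t [dt dt1]] := near_d _ d_gt0; set δ := Num.min 1 (e / 3) in d_gt0 dt dt1.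
have Gdt : close (1 + δ) (G d) (picard t.+1).
  have rδ : 1 + r * (1 + δ - 1) <= 1 + δ.
    by rewrite addrAC subrr add0r lerD2l ler_piMl // ltW.
  apply: close_le (G_pos dpos) (picard_pos t.+1) rδ (G_contract dpos (picard_pos t) _ dt).
  by rewrite lerDl ltW.
apply: close_le (G_pos dpos) dpos _ (close_trans _ _ Gdt (close_sym dt1)).
have : δ <= 1 by rewrite ge_min lexx.
have : δ <= e / 3 by rewrite ge_min lexx orbT.
nra.
all: by rewrite addr_ge0 // ltW.
Qed.

End ThompsonContraction.

Section FixedPointEquation.
Variables (R : realType) (gamma : R) (u : R -> R) (p n : nat) (X : 'M[R]_(p, n)) (uinf : R).
Hypotheses (gamma_gt0 : 0 < gamma) (u_pos : positive_fun u) (u_stable : stable u).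
Hypotheses (uinf_gt0 : 0 < uinf) (u_le : forall x, 0 < x -> u x <= uinf).

Let u_diag_ge0 (d : 'rV[R]_n) : pos_diag d -> forall j, 0 <= u_diag u d 0 j.
Proof. by move=> dpos j; rewrite mxE ltW ?u_pos. Qed.

Let u_diag_le (d : 'rV[R]_n) : pos_diag d -> forall j, u_diag u d 0 j <= uinf.
Proof. by move=> dpos j; rewrite mxE u_le. Qed.

Lemma IX_u_diag_box : (forall i, col i X != 0) -> exists2 lo, 0 < lo &
  forall d, pos_diag d -> forall i,
    lo <= IX gamma X (u_diag u d) 0 i <= n%:R^-1 * (gamma^-1 * frobenius2 X).
Proof.
move=> X_col; set L := gram_bound X uinf.
have L_ge0 : 0 <= L by exact/gram_bound_ge0/ltW.
have n_gt0 (i : 'I_n) : 0 < n%:R^-1 :> R.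
  by rewrite invr_gt0 ltr0n (leq_ltn_trans _ (ltn_ord i)).
have [lo lo_gt0 lo_le] : exists2 lo, 0 < lo &
    forall i, lo <= n%:R^-1 * (qform 1%:M (col i X)^T / (L + gamma)).
  apply: fin_pos_lbound => i; rewrite mulr_gt0 ?divr_gt0 ?ltr_wpDl ?(n_gt0 i) //.
  by apply: (proj2 (posdefmx1 R p)); rewrite trmx_eq0.
exists lo => // d dpos i; rewrite IXE; apply/andP; split.
- apply: le_trans (lo_le i) _; rewrite ler_pM2l ?(n_gt0 i) // ler_pdivrMr ?ltr_wpDl // mulrC.
  exact: invform_resolvent_ge (ltW uinf_gt0) (u_diag_ge0 dpos) (u_diag_le dpos).
- rewrite ler_pM2l ?(n_gt0 i) //.
  apply: le_trans (invform_resolvent_le _ gamma_gt0 _ (u_diag_ge0 dpos)) _.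
  rewrite ler_pM2l ?invr_gt0 // /frobenius2 (bigD1 i) //= lerDl.
  by rewrite sumr_ge0 // => j _; exact: qform1_ge0.
Qed.

Lemma IX_u_diag_contract a d d' : pos_diag d -> pos_diag d' -> 1 <= a -> close a d d' ->
  close (1 + gram_bound X uinf / (gram_bound X uinf + gamma) * (a - 1))
        (IX gamma X (u_diag u d)) (IX gamma X (u_diag u d')).
Proof.
move=> dpos d'pos a1 dd' i; rewrite !IXE.
have n_ge0 : 0 <= n%:R^-1 :> R by rewrite invr_ge0.
have scale e e' : pos_diag e -> pos_diag e' ->
    (forall j, u_diag u e 0 j <= a * u_diag u e' 0 j) ->
    n%:R^-1 * invform (resolvent X gamma (u_diag u e')) (col i X) <=
    (1 + gram_bound X uinf / (gram_bound X uinf + gamma) * (a - 1)) *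
    (n%:R^-1 * invform (resolvent X gamma (u_diag u e)) (col i X)).
  move=> epos e'pos ee'; rewrite mulrCA; apply: (ler_wpM2l n_ge0).
  apply: (invform_resolvent_scale _ gamma_gt0 _ (ltW uinf_gt0) a1
    (u_diag_ge0 epos) (u_diag_ge0 e'pos) (u_diag_le epos) ee').
have [ude_le ud'_le] : (forall j, u_diag u d 0 j <= a * u_diag u d' 0 j) /\
                        (forall j, u_diag u d' 0 j <= a * u_diag u d 0 j).
  by split=> j; rewrite !mxE; have [? ?] := dd' j; apply: stable_close.
by split; apply: scale.
Qed.

End FixedPointEquation.

Theorem proposition3 (R : realType) (gamma : R) (u : R -> R) (p n : nat)
  (X : 'M[R]_(p, n)) :
  0 < gamma ->
  positive_fun u ->
  stable u ->
  (exists uinf : R, 0 < uinf /\ forall x, 0 < x -> u x <= uinf) ->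
  (forall i : 'I_n, col i X != 0) ->
  exists d : 'rV[R]_n,
    [/\ pos_diag d, d = IX gamma X (u_diag u d) &
      forall d' : 'rV[R]_n, pos_diag d' -> d' = IX gamma X (u_diag u d') ->
        d' = d].
Proof.
move=> gamma_gt0 u_pos u_stable [uinf [uinf_gt0 u_le]] X_col.
have L_ge0 := gram_bound_ge0 X (ltW uinf_gt0).
set r := gram_bound X uinf / (gram_bound X uinf + gamma).
have r_ge0 : 0 <= r by rewrite divr_ge0 // addr_ge0 // ltW.
have r_lt1 : r < 1 by rewrite ltr_pdivrMr ?mul1r ?ltrDl // ltr_wpDl.
have [lo lo_gt0 box] := IX_u_diag_box gamma_gt0 u_pos uinf_gt0 u_le X_col.
have contract := IX_u_diag_contract X gamma_gt0 u_pos u_stable uinf_gt0 u_le.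
have [d dpos fix_d] := fixpoint_exists r_ge0 r_lt1 lo_gt0 box contract.
exists d; split => [//||d' d'pos fix_d']; first by rewrite fix_d.
by apply: (fixpoint_unique r_ge0 r_lt1 lo_gt0 box contract d'pos dpos).
Qed.
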